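(* For every integer $k\ge 2$, every finite graph $G$ with maximum degree $\Delta\ge 1$ has a star-$k$ coloring with at most $C_{2k-2}\,k^{\frac{1}{2k-2}}\,\Delta^{\frac{2k-1}{2k-2}}+\Delta$ colors, where $C_\ell=\ell\,(\ell-1)^{\frac1\ell-1}$.
   Context: A star-$k$ coloring of a graph is a proper vertex-coloring such that every path on $2k$ vertices contains at least three colors. *)

From mathcomp Require Import all_boot.
From Stdlib Require Import Reals.
Set Implicit Arguments. Unset Strict Implicit. Unset Printing Implicit Defensive.

(* A finite simple graph is a symmetric irreflexive relation e on a finType T. *)

Definition deg (T : finType) (e : rel T) (v : T) : nat := #|[pred u | e v u]|.

Definition maxdeg (T : finType) (e : rel T) : nat := \max_(v : T) deg e v.

Definition proper_coloring (T : finType) (e : rel T) (C : Type) (c : T -> C) : Prop :=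
  forall u v, e u v -> c u <> c v.

Definition star_k_coloring (T : finType) (e : rel T) (k : nat) (m : nat)
    (c : T -> 'I_m) : Prop :=
  proper_coloring e c /\
  forall (x : T) (s : seq T),
    size (x :: s) = (2 * k)%N -> uniq (x :: s) -> path e x s ->
    (3 <= size (undup (map c (x :: s))))%N.

Definition Cconst (l : nat) : R :=
  (INR l * Rpower (INR l - 1) (/ INR l - 1))%R.

Definition star_bound (k D : nat) : R :=
  (Cconst (2 * k - 2) * Rpower (INR k) (/ INR (2 * k - 2))
     * Rpower (INR D) (INR (2 * k - 1) / INR (2 * k - 2)) + INR D)%R.

From mathcomp Require Import all_boot zify.
From Stdlib Require Import Reals Lra Psatz.
From Stdlib Require ZArith.
Set Implicit Arguments. Unset Strict Implicit. Unset Printing Implicit Defensive.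

(* Let N(S) count the colourings with m colours that are proper on S and
   two-colour no path on 2k vertices inside S.  Every valid colouring of S \ v
   extends at v in at least m - D ways.  A bad extension two-colours a path on
   2k vertices through v, which after reversal has v among its first k
   vertices; there are at most k D (D-1)^(2k-2) such paths.  A two-coloured
   properly coloured path alternates, so a bad extension is determined by its
   restriction to S minus the first 2k-2 vertices of the path, and by induction
   there are at most N(S \ v) / b^(2k-3) of those.  Hence
   N(S) >= (m - D - k D (D-1)^(2k-2) / b^(2k-3)) N(S \ v) >= b N(S \ v), so
   N(V) >= b^|V| > 0.  The optimal choice b = ((2k-3) k D)^(1/(2k-2)) (D-1)
   gives the bound. *)

Lemma leq_card_bigcup (I T : finType) (P : pred I) (F : I -> {set T}) :
  #|\bigcup_(i | P i) F i| <= \sum_(i | P i) #|F i|.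
Proof.
apply: (big_ind2 (fun (U : {set T}) n => #|U| <= n)) => //; first by rewrite cards0.
by move=> U1 n1 U2 n2 h1 h2; apply: leq_trans (leq_card_setU U1 U2) (leq_add h1 h2).
Qed.

Section SimplePaths.
Variables (T : finType) (e : rel T).
Hypothesis esym : symmetric e.
Local Notation D := (maxdeg e).

Definition simple_path (s : seq T) :=
  uniq s && (if s is x :: s' then path e x s' else true).

Lemma simple_path_rev s : simple_path (rev s) = simple_path s.
Proof.
rewrite /simple_path rev_uniq; case: s => [|x s] //=.
rewrite lastI rev_rcons /=; congr (_ && _).
by rewrite rev_path; apply: eq_path => a b; exact: esym.
Qed.

Lemma card_nbr_le v : #|[set u | e v u]| <= D.
Proof. by rewrite cardsE; exact: (@leq_bigmax _ (deg e) v). Qed.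

Definition paths_at n j (v : T) :=
  [set t : n.-tuple T | simple_path t && (nth v t j == v)].

Definition path_bound (D n : nat) := if n <= 1 then 1 else D * D.-1 ^ (n - 2).

(* A path with [v] at position [j.+1] is a path with [v] at position [j]
   preceded by a neighbour of its head other than its second vertex. *)
Lemma card_paths_at_cons n j v : j < n ->
  #|paths_at n.+1 j.+1 v| <= (if 1 < n then D.-1 else D) * #|paths_at n j v|.
Proof.
move=> jn.
pose P := [set p : n.-tuple T * T |
  [&& p.1 \in paths_at n j v, e p.2 (head v p.1) & p.2 \notin val p.1]].
pose cons_t (p : n.-tuple T * T) : n.+1.-tuple T := [tuple of p.2 :: p.1].
have sub : paths_at n.+1 j.+1 v \subset cons_t @: P.
  apply/subsetP => t; rewrite inE => /andP[ut nt].
  apply/imsetP; exists (behead_tuple t, thead t); last first.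
    by apply: val_inj; rewrite /= [in LHS](tuple_eta t).
  have tE : (t : seq T) = thead t :: behead t by rewrite [in LHS](tuple_eta t).
  have sb : size (behead t) = n by rewrite size_behead size_tuple.
  move: ut nt; rewrite !inE tE /simple_path /=.
  change (tval (behead_tuple t)) with (behead t).
  move: (thead t) (behead t) sb => x [|y s] /=; first by move=> h; exfalso; lia.
  by move=> _ /andP[/andP[-> ->] /andP[-> ->]] ->.
apply: leq_trans (subset_leq_card sub) _; apply: leq_trans (leq_imset_card _ _) _.
have -> : #|P| = \sum_(t in paths_at n j v) #|[set x | e x (head v t) && (x \notin val t)]|.
  rewrite -(eq_bigr _ (fun t _ => sum1dep_card _)) pair_big_dep sum1dep_card.
  by apply: eq_card => p; rewrite !inE.
rewrite mulnC -sum_nat_const; apply: leq_sum => t; rewrite inE => /andP[+ _].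
case: ifP => [n1|_]; last first.
  move=> _; apply: leq_trans (card_nbr_le (head v t)); apply: subset_leq_card.
  by apply/subsetP => x; rewrite !inE esym => /andP[].
case: t => -[|a [|b s]] //= /eqP st; try by move: n1; rewrite -st.
move=> /andP[/andP[_ /andP[nb _]] /andP[eab _]].
have sub2 : [set x | e x a && (x \notin [:: a, b & s])] \subset [set x | e a x] :\ b.
  by apply/subsetP => x; rewrite !inE !negb_or esym => /andP[-> /and3P[_ -> _]].
apply: leq_trans (subset_leq_card sub2) _.
have := cardsD1 b [set x | e a x]; rewrite inE eab.
have := card_nbr_le a; lia.
Qed.

Lemma card_paths_at_rev n j v : j < n -> #|paths_at n j v| <= #|paths_at n (n - j.+1) v|.
Proof.
move=> jn; rewrite -(card_in_imset (f := @rev_tuple _ T)); last first.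
  by move=> t1 t2 _ _ /(congr1 val) /(congr1 rev) /=; rewrite !revK => /val_inj.
apply: subset_leq_card; apply/subsetP => _ /imsetP[t + ->].
rewrite !inE /= simple_path_rev => /andP[-> /eqP nt] /=.
rewrite nth_rev size_tuple; last lia.
by rewrite -[X in _ == X]nt; apply/eqP; congr nth; lia.
Qed.

Lemma card_paths_at_le n j v : j < n -> #|paths_at n j v| <= path_bound D n.
Proof.
elim: n j => // n IH j jn.
have inner j' : 0 < j' < n.+1 -> #|paths_at n.+1 j' v| <= path_bound D n.+1.
  case: j' => [|j'] // /andP[_ j'n]; have {}j'n : j' < n by [].
  apply: leq_trans (card_paths_at_cons v j'n) _.
  have := IH j' j'n; rewrite /path_bound.
  case: n {IH jn} j'n => [|[|n']] // j'n h; first by rewrite /=; apply: leq_mul.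
  apply: leq_trans (leq_mul (leqnn _) h) _; rewrite mulnCA.
  by have -> : n'.+2 - 2 = n' by lia.
case: j jn => [|j] jn; last exact: inner.
case: n IH inner jn => [|n] _ inner _.
  apply: leq_trans (_ : #|[set [tuple v]]| <= 1); last by rewrite cards1.
  apply: subset_leq_card; apply/subsetP => t; rewrite !inE.
  by case: t => [[|x [|? ?]]] //= st /eqP ->; apply/eqP; exact: val_inj.
by apply: leq_trans (card_paths_at_rev v _) _ => //; apply: inner; lia.
Qed.

End SimplePaths.

Section TwoColored.
Variables (T C : eqType).
Implicit Types (f g : T -> C) (s : seq T).

Definition two_colored f s := size (undup (map f s)) <= 2.

Lemma eq_in_two_colored f g s : {in s, f =1 g} -> two_colored f s = two_colored g s.
Proof. by move/eq_in_map; rewrite /two_colored => ->. Qed.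

Lemma two_colored_rev f s : two_colored f (rev s) = two_colored f s.
Proof.
by rewrite /two_colored map_rev (perm_size (perm_undup (mem_rev _))).
Qed.

Section Alternation.
Variables (f : T -> C) (s : seq T) (y : T).
Hypothesis f_alt : forall i, i.+1 < size s -> f (nth y s i) != f (nth y s i.+1).
Hypothesis f2 : two_colored f s.

Lemma two_colored_alt2 i : i.+2 < size s -> f (nth y s i) = f (nth y s i.+2).
Proof.
move=> hi; have ab := f_alt (ltnW hi); have bc := f_alt hi.
apply/eqP; apply: contraTT f2 => ac; rewrite /two_colored -ltnNge.
apply: (@uniq_leq_size _ [:: f (nth y s i); f (nth y s i.+1); f (nth y s i.+2)]).
  by rewrite /= !inE negb_or ab ac bc.
move=> z; rewrite !inE mem_undup => /or3P[] /eqP ->; apply: map_f; apply: mem_nth.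
- exact: ltnW (ltnW hi).
- exact: ltnW hi.
- exact: hi.
Qed.

Lemma two_colored_alt i d : i + 2 * d < size s -> f (nth y s i) = f (nth y s (i + 2 * d)).
Proof.
elim: d => [|d IH] hi; first by rewrite muln0 addn0.
rewrite IH; last lia.
have -> : i + 2 * d.+1 = (i + 2 * d).+2 by lia.
by apply: two_colored_alt2; lia.
Qed.

End Alternation.

(* A two-colouring of a sequence in which consecutive items get different
   colours alternates, so it is determined by the colours of the last two. *)
Lemma two_colored_eq_drop f g s y :
  (forall i, i.+1 < size s -> f (nth y s i) != f (nth y s i.+1)) ->
  (forall i, i.+1 < size s -> g (nth y s i) != g (nth y s i.+1)) ->
  two_colored f s -> two_colored g s ->
  {in drop (size s - 2) s, f =1 g} -> {in s, f =1 g}.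
Proof.
move=> f_alt g_alt f2 g2 fg x xs; rewrite -(nth_index y xs).
have ix : index x s < size s by rewrite index_mem.
set i := index x s in ix *.
have fg_nth j : size s - 2 <= j < size s -> f (nth y s j) = g (nth y s j).
  move=> /andP[j1 j2]; apply: fg.
  have jd : j - (size s - 2) < size (drop (size s - 2) s) by rewrite size_drop; lia.
  by have := mem_nth y jd; rewrite nth_drop subnKC.
case: (leqP (size s - 2) i) => [i2|i2]; first by apply: fg_nth; rewrite i2.
have [d d1 d2] : exists2 d, size s - 2 <= i + 2 * d & i + 2 * d < size s.
  by exists ((size s - 1 - i) %/ 2); move: i2; clear; lia.
rewrite (two_colored_alt f_alt f2 d2) (two_colored_alt g_alt g2 d2).
by apply: fg_nth; rewrite d1.
Qed.

End TwoColored.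

Section PartialColorings.
Variables (T : finType) (e : rel T).
Hypotheses (esym : symmetric e) (eirr : irreflexive e).
Variables (k m : nat) (x0 : 'I_m).
Hypothesis k_gt1 : 1 < k.

Local Notation D := (maxdeg e).
Local Notation col := {ffun T -> 'I_m}.

Definition proper_on (S : {set T}) (f : col) :=
  [forall u in S, forall w in S, e u w ==> (f u != f w)].

Definition star_on (S : {set T}) (f : col) :=
  proper_on S f &&
  [forall t : (2 * k).-tuple T,
     simple_path e t && all [in S] t ==> ~~ two_colored f t].

(* A colouring valid on [S] is represented by the one equal to [x0] off [S]. *)
Definition colorings (S : {set T}) :=
  [set f : col | star_on S f && [forall x, (x \notin S) ==> (f x == x0)]].

Definition ncolorings (S : {set T}) := #|colorings S|.

Lemma proper_onP (S : {set T}) (f : col) :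
  reflect (forall u w, u \in S -> w \in S -> e u w -> f u != f w) (proper_on S f).
Proof.
apply: (iffP forallP) => [h u w uS wS euw | h u].
  by have := h u; rewrite uS /= => /forallP /(_ w); rewrite wS euw.
by apply/implyP => uS; apply/forallP => w; apply/implyP => wS; apply/implyP; apply: h.
Qed.

Lemma proper_on_path (A : {set T}) (f : col) (t : seq T) y :
  proper_on A f -> simple_path e t -> all [in A] t ->
  forall i, i.+1 < size t -> f (nth y t i) != f (nth y t i.+1).
Proof.
case: t => [|x s] // /proper_onP pf /andP[_ ps] tA i hi.
apply: pf; try exact/(allP tA)/mem_nth/(ltnW hi); first exact/(allP tA)/mem_nth.
exact: (pathP y ps).
Qed.

Lemma eq_in_star_on (S : {set T}) (f g : col) :
  {in S, f =1 g} -> star_on S f -> star_on S g.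
Proof.
move=> fg /andP[/proper_onP pf /forallP vf]; apply/andP; split.
  by apply/proper_onP => u w uS wS euw; rewrite -!fg //; apply: pf.
apply/forallP => t; apply/implyP => /andP[ut tS]; have := vf t; rewrite ut tS /=.
by rewrite (@eq_in_two_colored _ _ f g) // => x xt; apply: fg; exact: (allP tS).
Qed.

Lemma star_onS (A B : {set T}) (f : col) : A \subset B -> star_on B f -> star_on A f.
Proof.
move=> AB /andP[/proper_onP pf /forallP vf]; apply/andP; split.
  by apply/proper_onP => u w uA wA; apply: pf; exact: (subsetP AB).
apply/forallP => t; apply/implyP => /andP[ut tA]; have := vf t; rewrite ut /=.
suff -> : all [in B] t by [].
by apply/allP => x xt; apply: (subsetP AB); exact: (allP tA).
Qed.

Lemma colorings_out (S : {set T}) (f : col) x : f \in colorings S -> x \notin S -> f x = x0.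
Proof. by rewrite inE => /andP[_ /forallP /(_ x) /implyP h] /h /eqP. Qed.

Lemma colorings_star_on (S : {set T}) (f : col) : f \in colorings S -> star_on S f.
Proof. by rewrite inE => /andP[]. Qed.

Lemma star_on_setT (f : col) :
  star_on [set: T] f -> star_k_coloring e k (fun x => f x).
Proof.
move=> /andP[/proper_onP pf /forallP sf]; split.
  by move=> u w euw; apply/eqP; apply: pf; rewrite ?inE.
move=> x s hs hu hp; have hs' : size (x :: s) == 2 * k by apply/eqP.
have := sf (Tuple hs'); rewrite /= /simple_path hu hp /=.
have -> : all [in [set: T]] s by apply/allP => y; rewrite inE.
by rewrite inE /two_colored -ltnNge.
Qed.

Lemma ncolorings0 : ncolorings set0 = 1.
Proof.
rewrite /ncolorings -(cards1 ([ffun=> x0] : col)); apply: eq_card => f; rewrite !inE.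
apply/idP/eqP => [/andP[_ /forallP h] | ->].
  by apply/ffunP => x; rewrite ffunE; have := h x; rewrite inE => /eqP.
apply/andP; split; last by apply/forallP => x; rewrite ffunE eqxx implybT.
apply/andP; split; first by apply/proper_onP => u w; rewrite inE.
apply/forallP => t; apply/implyP => /andP[_].
case: t => -[|x s] /= hs; last by rewrite inE.
by exfalso; move/eqP: hs; lia.
Qed.

Definition path_prefix (t : seq T) := [set x in take (2 * k - 2) t].

Section Extensions.
Variables (S : {set T}) (v : T).
Hypothesis vS : v \in S.
Local Notation S' := (S :\ v).

Definition extend (g : col) (c : 'I_m) : col := [ffun x => if x == v then c else g x].

Definition nbr_colors (g : col) := [set g u | u in [set u in S' | e v u]].

Definition extensions :=
  [set p : col * 'I_m | (p.1 \in colorings S') && (p.2 \notin nbr_colors p.1)].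

Definition bad_extensions :=
  extensions :\: [set p | extend p.1 p.2 \in colorings S].

Definition head_paths :=
  [set t : (2 * k).-tuple T | [&& simple_path e t, v \in val t & index v t < k]].

Definition bad_along (t : seq T) :=
  [set p in extensions | all [in S] t && two_colored (extend p.1 p.2) t].

Lemma card_nbr_colors g : #|nbr_colors g| <= D.
Proof.
apply: leq_trans (leq_imset_card _ _) (leq_trans _ (card_nbr_le e v)).
by apply: subset_leq_card; apply/subsetP => u; rewrite !inE => /andP[].
Qed.

Lemma card_extensions_ge : (m - D) * ncolorings S' <= #|extensions|.
Proof.
have -> : #|extensions| = \sum_(g in colorings S') #|~: nbr_colors g|.
  rewrite -(eq_bigr _ (fun g _ => sum1_card _)) pair_big_dep sum1dep_card.
  by apply: eq_card => p; rewrite !inE.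
rewrite mulnC -sum_nat_const; apply: leq_sum => g _.
by have := cardsC (nbr_colors g); rewrite card_ord; have := card_nbr_colors g; lia.
Qed.

Lemma extend_on p : p \in extensions -> {in S', extend p.1 p.2 =1 p.1}.
Proof. by move=> _ x; rewrite !inE ffunE => /andP[/negbTE -> _]. Qed.

Lemma extend_out p x : p \in extensions -> x \notin S -> extend p.1 p.2 x = x0.
Proof.
case: p => g c; rewrite inE /= => /andP[gS' _] xS.
have xv : x != v by apply: contraNneq xS => ->.
by rewrite ffunE (negbTE xv); apply: colorings_out gS' _; rewrite !inE negb_and xS orbT.
Qed.

Lemma extend_proper p : p \in extensions -> proper_on S (extend p.1 p.2).
Proof.
case: p => g c; rewrite inE /= => /andP[gS' cn].
have /proper_onP pg := proj1 (andP (colorings_star_on gS')).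
have cv w : w \in S -> e v w -> c != g w.
  move=> wS ew; apply: contraNneq cn => ->; apply/imsetP; exists w => //.
  by rewrite !inE ew wS !andbT; apply: contraTneq ew => ->; rewrite eirr.
apply/proper_onP => u w uS wS euw; rewrite !ffunE.
case: (eqVneq u v) => [uv|uv]; case: (eqVneq w v) => [wv|wv].
- by move: euw; rewrite uv wv eirr.
- by subst u; apply: cv.
- by subst w; rewrite eq_sym; apply: cv => //; rewrite esym.
- by apply: pg => //; rewrite !inE ?uv ?wv.
Qed.

Lemma extend_inj : {in extensions &, injective (fun p => extend p.1 p.2)}.
Proof.
move=> [g1 c1] [g2 c2]; rewrite inE /= => /andP[g1S' _]; rewrite inE /= => /andP[g2S' _] h.
have vS' : v \notin S' by rewrite !inE eqxx.
congr pair; last by have := congr1 (fun f : col => f v) h; rewrite !ffunE eqxx.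
apply/ffunP => x; case: (eqVneq x v) => [->|xv].
  by rewrite (colorings_out g1S' vS') (colorings_out g2S' vS').
by have := congr1 (fun f : col => f x) h; rewrite !ffunE (negbTE xv).
Qed.

Lemma card_extensions_le : #|extensions| <= ncolorings S + #|bad_extensions|.
Proof.
rewrite -(cardsID [set p | extend p.1 p.2 \in colorings S] extensions) leq_add2r.
rewrite -(card_in_imset (f := fun p => extend p.1 p.2)); last first.
  by move=> p1 p2 /setIP[p1E _] /setIP[p2E _]; apply: extend_inj.
apply: subset_leq_card; apply/subsetP => _ /imsetP[p /setIP[_ +] ->].
by rewrite inE.
Qed.

Lemma bad_extension_path p : p \in bad_extensions ->
  exists t : (2 * k).-tuple T,
    [&& simple_path e t, all [in S] t, v \in val t & two_colored (extend p.1 p.2) t].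
Proof.
case/setDP=> pE; rewrite inE => nS.
have gS' : p.1 \in colorings S' by move: pE; rewrite inE => /andP[].
have : ~~ star_on S (extend p.1 p.2).
  apply: contra nS => sf; rewrite inE sf /=.
  by apply/forallP => x; apply/implyP => xS; rewrite extend_out.
rewrite /star_on extend_proper //= => /forallPn[t].
rewrite negb_imply negbK => /andP[/andP[ut tS] bt].
exists t; rewrite ut tS bt /= andbT.
apply: contraLR bt => nvt.
have tS' : all [in S'] t.
  apply/allP => x xt; rewrite !inE (allP tS x xt) andbT.
  by apply: contraNneq nvt => <-.
have /andP[_ /forallP /(_ t)] := colorings_star_on gS'; rewrite ut tS' /=.
by rewrite (@eq_in_two_colored _ _ p.1 (extend p.1 p.2)) // => x /(allP tS') /extend_on ->.
Qed.

Lemma bad_extensions_sub : bad_extensions \subset \bigcup_(t in head_paths) bad_along t.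
Proof.
apply/subsetP => p pB; have pE : p \in extensions by case/setDP: pB.
have [t /and4P[ut tS vt bt]] := bad_extension_path pB.
case: (ltnP (index v t) k) => ik.
  by apply/bigcupP; exists t; rewrite inE ?ut ?vt ?ik // pE tS.
apply/bigcupP; exists (rev_tuple t); last by rewrite inE pE /= all_rev tS two_colored_rev.
have ilt : index v t < size t by rewrite index_mem.
have urt : uniq (rev t) by rewrite rev_uniq; case/andP: ut.
have hr : nth v (rev t) (size t - (index v t).+1) = v.
  rewrite nth_rev; last lia.
  by rewrite (_ : size t - (size t - (index v t).+1).+1 = index v t) ?nth_index //; lia.
rewrite inE /= simple_path_rev // ut mem_rev vt /=.
by rewrite -[X in index X _]hr index_uniq ?size_rev ?size_tuple //; lia.
Qed.

Lemma card_head_paths : #|head_paths| <= k * path_bound D (2 * k).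
Proof.
have sub : head_paths \subset \bigcup_(j < k) paths_at e (2 * k) j v.
  apply/subsetP => t; rewrite inE => /and3P[ut vt ik].
  by apply/bigcupP; exists (Ordinal ik) => //; rewrite inE ut /= nth_index.
apply: leq_trans (subset_leq_card sub) (leq_trans (leq_card_bigcup _ _) _).
have -> : k * path_bound D (2 * k) = \sum_(j < k) path_bound D (2 * k).
  by rewrite sum_nat_const card_ord.
apply: leq_sum => j _.
by apply: card_paths_at_le => //; have := ltn_ord j; lia.
Qed.

Lemma card_bad_extensions :
  #|bad_extensions| <= #|head_paths| * \max_(t in head_paths) #|bad_along t|.
Proof.
apply: leq_trans (subset_leq_card bad_extensions_sub) (leq_trans (leq_card_bigcup _ _) _).
rewrite -sum_nat_const; apply: leq_sum => t tP.
exact: (@leq_bigmax_cond _ [in head_paths] (fun t => #|bad_along t|) t tP).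
Qed.

Lemma mem_path_prefix t : t \in head_paths -> v \in path_prefix t.
Proof.
by rewrite !inE => /and3P[_ vt ik]; rewrite in_take //; lia.
Qed.

Lemma setD_path_prefix_sub t : t \in head_paths -> S :\: path_prefix t \subset S'.
Proof.
move=> tP; apply/subsetP => x; rewrite in_setD in_setD1 => /andP[xX ->].
by rewrite andbT; apply: contraNneq xX => ->; exact: mem_path_prefix.
Qed.

Lemma card_setD_path_prefix t : t \in head_paths -> all [in S] t ->
  #|S'| - #|S :\: path_prefix t| = 2 * k - 3.
Proof.
move=> tP tS; have ut : uniq t by move: tP; rewrite inE => /and3P[/andP[]].
have XS : path_prefix t \subset S.
  by apply/subsetP => x; rewrite inE => /mem_take; exact: (allP tS).
have cX : #|path_prefix t| = 2 * k - 2.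
  rewrite cardsE; move/card_uniqP: (take_uniq (2 * k - 2) ut) => ->.
  by rewrite size_takel // size_tuple; lia.
have cS := cardsD1 v S; rewrite vS in cS.
rewrite (cardsDS XS); have := subset_leq_card XS; move: cX cS k_gt1; lia.
Qed.

Definition reset_on (X : {set T}) (f : col) : col :=
  [ffun x => if x \in X then x0 else f x].

Lemma reset_extend_colorings t p : t \in head_paths -> p \in extensions ->
  reset_on (path_prefix t) (extend p.1 p.2) \in colorings (S :\: path_prefix t).
Proof.
move=> tP pE; set X := path_prefix t; have XS' := setD_path_prefix_sub tP.
have gS' : p.1 \in colorings S' by move: pE; rewrite inE => /andP[].
rewrite inE; apply/andP; split.
  apply: (@eq_in_star_on _ p.1); last exact: star_onS XS' (colorings_star_on gS').
  move=> x xA; rewrite ffunE; move: (xA); rewrite inE => /andP[/negbTE -> _].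
  by rewrite extend_on // (subsetP XS').
apply/forallP => x; apply/implyP; rewrite ffunE in_setD negb_and negbK.
by case: ifP => //= _ xS; rewrite extend_out.
Qed.

(* Two bad colourings along [t] alternate on [t], so they are determined on the
   prefix of [t] by the last two vertices of [t], which lie outside it. *)
Lemma card_bad_along t : t \in head_paths ->
  #|bad_along t| <= ncolorings (S :\: path_prefix t).
Proof.
move=> tP; set X := path_prefix t.
have ut : simple_path e t by move: tP; rewrite inE => /and3P[].
have st : size t = 2 * k by rewrite size_tuple.
rewrite -(card_in_imset (f := fun p => reset_on X (extend p.1 p.2))).
  apply: subset_leq_card; apply/subsetP => _ /imsetP[p + ->].
  by rewrite inE => /andP[pE _]; exact: reset_extend_colorings.
move=> p1 p2; rewrite inE => /andP[p1E /andP[tS b1]].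
rewrite inE => /andP[p2E /andP[_ b2]] hr.
have eqX x : x \notin X -> extend p1.1 p1.2 x = extend p2.1 p2.2 x.
  by move=> xX; have := congr1 (fun f : col => f x) hr; rewrite !ffunE (negbTE xX).
apply: extend_inj => //=; apply/ffunP => x.
have [xX|] := boolP (x \in X); last exact: eqX.
apply: (two_colored_eq_drop (y := v) _ _ b1 b2); last by move: xX; rewrite inE => /mem_take.
- exact: proper_on_path (extend_proper p1E) ut tS.
- exact: proper_on_path (extend_proper p2E) ut tS.
have /andP[tu _] := ut.
rewrite -[t in uniq t](cat_take_drop (2 * k - 2)) cat_uniq in tu.
case/and3P: tu => _ /hasPn tX _ y; rewrite st => yd; apply: eqX; rewrite inE.
exact: tX.
Qed.

Section Step.
Variable b : R.
Hypothesis b_gt0 : (0 < b)%R.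
Hypothesis chain : forall A : {set T}, A \subset S' ->
  (b ^ (#|S'| - #|A|) * INR (ncolorings A) <= INR (ncolorings S'))%R.

Lemma card_bad_along_scaled t : t \in head_paths ->
  (b ^ (2 * k - 3) * INR #|bad_along t| <= INR (ncolorings S'))%R.
Proof.
move=> tP; case: (posnP #|bad_along t|) => [->|].
  by rewrite Rmult_0_r; exact: pos_INR.
rewrite card_gt0 => /set0Pn[p]; rewrite inE => /andP[_ /andP[tS _]].
apply: (Rle_trans _ _ _ _ (chain (setD_path_prefix_sub tP))).
rewrite card_setD_path_prefix //.
apply: Rmult_le_compat_l; first exact/pow_le/Rlt_le.
exact/le_INR/leP/card_bad_along.
Qed.

Lemma max_bad_along_scaled :
  (b ^ (2 * k - 3) * INR (\max_(t in head_paths) #|bad_along t|) <= INR (ncolorings S'))%R.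
Proof.
case: (posnP #|head_paths|) => [/card0_eq P0|].
  by rewrite big_pred0 // Rmult_0_r; exact: pos_INR.
case/(eq_bigmax_cond (fun t : (2 * k).-tuple T => #|bad_along t|)) => t tP ->.
exact: card_bad_along_scaled.
Qed.

Lemma ncolorings_step : D <= m ->
  (b + INR (k * path_bound D (2 * k)) / b ^ (2 * k - 3) <= INR m - INR D)%R ->
  (b * INR (ncolorings S') <= INR (ncolorings S))%R.
Proof.
move=> D_le_m hb.
set q := (b ^ (2 * k - 3))%R; set K := INR (k * path_bound D (2 * k)).
set Mx := \max_(t in head_paths) #|bad_along t|.
have q_gt0 : (0 < q)%R by apply: pow_lt.
have N'_ge0 := pos_INR (ncolorings S').
have count : (INR (m - D) * INR (ncolorings S')
               <= INR (ncolorings S) + INR #|head_paths| * INR Mx)%R.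
  rewrite -!mult_INR -plus_INR; apply/le_INR/leP.
  apply: leq_trans (card_extensions_ge) (leq_trans card_extensions_le _).
  by rewrite leq_add2l card_bad_extensions.
have PK : (INR #|head_paths| <= K)%R by apply/le_INR/leP/card_head_paths.
have bad : (INR #|head_paths| * INR Mx <= K / q * INR (ncolorings S'))%R.
  apply: (Rle_trans _ (K * INR Mx)); first exact: Rmult_le_compat_r (pos_INR _) PK.
  have -> : (K * INR Mx = K / q * (q * INR Mx))%R by field; lra.
  apply: Rmult_le_compat_l; last exact: max_bad_along_scaled.
  exact: Rmult_le_pos (pos_INR _) (Rlt_le _ _ (Rinv_0_lt_compat _ q_gt0)).
rewrite minus_INR in count; last exact/leP.
move: hb; rewrite -/q -/K => hb; set r := (K / q)%R in bad hb.
nra.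
Qed.

End Step.
End Extensions.

Section Growth.
Variable b : R.
Hypotheses (b_gt0 : (0 < b)%R) (D_le_m : D <= m).
Hypothesis hb : (b + INR (k * path_bound D (2 * k)) / b ^ (2 * k - 3) <= INR m - INR D)%R.

Lemma ncolorings_chain n (S A : {set T}) : #|S| <= n -> A \subset S ->
  (b ^ (#|S| - #|A|) * INR (ncolorings A) <= INR (ncolorings S))%R.
Proof.
elim: n S A => [|n IH] S A cS AS.
  have S0 : S = set0 by apply/cards0_eq; lia.
  have A0 : A = set0 by apply/eqP; rewrite -subset0 -S0.
  by rewrite S0 A0 subnn /= Rmult_1_l; apply: Rle_refl.
have [->|AnS] := eqVneq A S; first by rewrite subnn /= Rmult_1_l; apply: Rle_refl.
have [v vS vA] : exists2 v, v \in S & v \notin A.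
  have : A \proper S by rewrite properEneq AnS AS.
  by case/properP => _ [v vS vA]; exists v.
have AS' : A \subset S :\ v.
  apply/subsetP => x xA; rewrite !inE (subsetP AS x xA) andbT.
  by apply: contraNneq vA => <-.
have cS' := cardsD1 v S; rewrite vS in cS'.
have cA := subset_leq_card AS'.
have cS'n : #|S :\ v| <= n by lia.
have -> : #|S| - #|A| = (#|S :\ v| - #|A|).+1 by lia.
have step := ncolorings_step vS b_gt0 (fun A => IH _ A cS'n) D_le_m hb.
rewrite /= Rmult_assoc; apply: (Rle_trans _ _ _ _ step).
by apply: Rmult_le_compat_l; [lra | exact: IH].
Qed.

Lemma exists_star_on : exists f : col, star_on [set: T] f.
Proof.
have := ncolorings_chain (leqnn #|[set: T]|) (sub0set [set: T]).
rewrite ncolorings0 cards0 subn0 Rmult_1_r => h.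
have : (0 < INR (ncolorings [set: T]))%R by apply: Rlt_le_trans h; apply: pow_lt.
case: (posnP (ncolorings [set: T])) => [->|]; first by rewrite /=; lra.
by rewrite card_gt0 => /set0Pn[f /colorings_star_on sf] _; exists f.
Qed.

End Growth.
End PartialColorings.

Lemma Rpower_ge1 x y : (1 <= x)%R -> (0 <= y)%R -> (1 <= Rpower x y)%R.
Proof.
move=> hx hy; rewrite -(Rpower_O x); last lra.
by apply: Rle_Rpower.
Qed.

Lemma Rpower_inv_pow x (l : nat) : (0 < x)%R -> (0 < l)%N -> (Rpower x (/ INR l) ^ l = x)%R.
Proof.
move=> hx hl; have hL : INR l <> 0%R by apply: not_0_INR; lia.
rewrite -Rpower_pow; last exact: exp_pos.
by rewrite Rpower_mult Rinv_l // Rpower_1.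
Qed.

Lemma nat_ceil_bounds x : (0 <= x)%R -> exists n : nat, (x < INR n <= x + 1)%R.
Proof.
move=> x0; have [up1 up2] := archimed x.
have upos : (0 <= up x)%Z by apply: le_IZR; lra.
exists (Z.to_nat (up x)); rewrite INR_IZR_INZ ZArith.Znat.Z2Nat.id //; lra.
Qed.

Section Constants.
Variable L : nat.
Hypothesis L_ge2 : (2 <= L)%N.

Let L_ge2R : (2 <= INR L)%R.
Proof. exact/(le_INR 2)/leP. Qed.

Let g := Rpower (INR L - 1) (/ INR L).

Let g_pow : (g ^ L = INR L - 1)%R.
Proof. by apply: Rpower_inv_pow; [lra | lia]. Qed.

Lemma CconstE : Cconst L = (INR L * g / (INR L - 1))%R.
Proof.
rewrite /Cconst /g /Rdiv -[(/ INR L - 1)%R]/(/ INR L + - 1)%R.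
by rewrite Rpower_plus Rpower_Ropp Rpower_1 //; lra.
Qed.

Lemma Cconst_ge1 : (1 <= Cconst L)%R.
Proof.
have g1 : (1 <= g)%R by apply: Rpower_ge1; [|apply/Rlt_le/Rinv_0_lt_compat]; lra.
rewrite CconstE; apply: (Rmult_le_reg_r (INR L - 1)); first lra.
by rewrite /Rdiv Rmult_assoc Rinv_l; nra.
Qed.

(* [b = g P] minimises [b + P^L / b^(L-1)], with minimum [C_L P]. *)
Lemma Cconst_balance P : (0 < P)%R -> (g * P + P ^ L / (g * P) ^ (L - 1) = Cconst L * P)%R.
Proof.
move=> P_gt0; rewrite CconstE.
have gpos : (0 < g)%R by apply: exp_pos.
have gp : (g * g ^ (L - 1) = INR L - 1)%R.
  by have := g_pow; have {1}-> : L = (L - 1).+1 by lia.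
have G_gt0 : (0 < g ^ (L - 1))%R by apply: pow_lt.
have -> : (P ^ L = P * P ^ (L - 1))%R.
  by rewrite tech_pow_Rmult; f_equal; lia.
have -> : INR L = (g * g ^ (L - 1) + 1)%R by lra.
rewrite Rpow_mult_distr; field.
by split; [lra | split; apply: pow_nonzero; lra].
Qed.

End Constants.

Lemma star_boundE k D : (2 <= k)%N -> (1 <= D)%N ->
  star_bound k D = (Cconst (2 * k - 2)
     * Rpower (INR k * INR D) (/ INR (2 * k - 2)) * INR D + INR D)%R.
Proof.
move=> k2 D1.
have L2 : (2 <= INR (2 * k - 2))%R by apply: (le_INR 2); lia.
have kpos : (0 < INR k)%R by apply: lt_0_INR; lia.
have Dpos : (0 < INR D)%R by apply: lt_0_INR; lia.
rewrite /star_bound.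
have -> : (INR (2 * k - 1) / INR (2 * k - 2) = 1 + / INR (2 * k - 2))%R.
  have -> : (2 * k - 1 = (2 * k - 2).+1)%N by lia.
  by rewrite S_INR; field; lra.
by rewrite Rpower_plus Rpower_1 // -Rpower_mult_distr //; ring.
Qed.

Lemma INR_head_bound k D : (2 <= k)%N -> (1 <= D)%N ->
  INR (k * path_bound D (2 * k))
    = ((Rpower (INR k * INR D) (/ INR (2 * k - 2)) * (INR D - 1)) ^ (2 * k - 2))%R.
Proof.
move=> k2 D1; have kD : (0 < INR k * INR D)%R by apply: Rmult_lt_0_compat; apply: lt_0_INR; lia.
rewrite Rpow_mult_distr Rpower_inv_pow //; last lia.
rewrite /path_bound ifF; last lia.
rewrite !mult_INR pow_INR -subn1 minus_INR /=; first ring.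
exact/leP.
Qed.

Lemma exists_parameters k D : (2 <= k)%N -> (1 <= D)%N ->
  exists (m : nat) (b : R), [/\ (D <= m)%N, (0 < b)%R,
    (b + INR (k * path_bound D (2 * k)) / b ^ (2 * k - 3) <= INR m - INR D)%R
    & (INR m <= star_bound k D)%R].
Proof.
move=> k2 D1; set L := (2 * k - 2)%N; set a := Rpower (INR k * INR D) (/ INR L).
have L2 : (2 <= L)%N by rewrite /L; lia.
have D1R : (1 <= INR D)%R by apply: (le_INR 1); lia.
have a1 : (1 <= a)%R.
  have k1 : (1 <= INR k)%R by apply: (le_INR 1); lia.
  apply: Rpower_ge1; first nra.
  by apply/Rlt_le/Rinv_0_lt_compat/lt_0_INR; lia.
have C1 := Cconst_ge1 L2.
set P := (a * (INR D - 1))%R.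
have CP : (0 <= Cconst L * P)%R by apply: Rmult_le_pos; [lra | apply: Rmult_le_pos; lra].
have [n [n1 n2]] := nat_ceil_bounds CP.
exists (D + n)%N; rewrite plus_INR.
have bound : (INR D + INR n <= star_bound k D)%R.
  have Ca : (1 <= Cconst L * a)%R by nra.
  have CPE : (Cconst L * P = Cconst L * a * INR D - Cconst L * a)%R by rewrite /P; ring.
  by rewrite star_boundE // -/L -/a; lra.
have [D_eq1|D_ge2] := eqVneq D 1%N.
  exists 1%R; split => //; [lia | lra |].
  have P0 : P = 0%R by rewrite /P D_eq1 /=; ring.
  rewrite (INR_head_bound k2 D1) -/L -/a -/P P0 pow_i; last lia.
  have : (0 < n)%N by apply/ltP/INR_lt; rewrite P0 Rmult_0_r /= in n1.
  move=> /ltP/(le_INR 1) /= n_ge1; rewrite /Rdiv Rmult_0_l; lra.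
have D2 : (2 <= INR D)%R by apply/(le_INR 2)/leP; lia.
have P_gt0 : (0 < P)%R by apply: Rmult_lt_0_compat; lra.
exists (Rpower (INR L - 1) (/ INR L) * P)%R; split => //; first lia.
  by apply: Rmult_lt_0_compat => //; apply: exp_pos.
have -> : (2 * k - 3 = L - 1)%N by rewrite /L; lia.
by rewrite (INR_head_bound k2 D1) -/L -/a -/P Cconst_balance //; lra.
Qed.

Theorem theorem10 (k : nat) (T : finType) (e : rel T) :
  (2 <= k)%N -> symmetric e -> irreflexive e -> (1 <= maxdeg e)%N ->
  exists (m : nat) (c : T -> 'I_m),
    star_k_coloring e k c /\ (INR m <= star_bound k (maxdeg e))%R.
Proof.
move=> k_ge2 esym eirr D_ge1.
have [m [b [D_le_m b_gt0 hb hm]]] := exists_parameters k_ge2 D_ge1.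
pose x0 : 'I_m := Ordinal (leq_trans D_ge1 D_le_m).
have [f /star_on_setT f_star] := exists_star_on esym eirr x0 k_ge2 b_gt0 D_le_m hb.
by exists m, (fun x => f x).
Qed.
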